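(* Let $n\ge 1$ and $k\ge 3$ be integers and $p:=k-2$. Let $\{v_1,\dots,v_n\}$ be an orthonormal basis of $\mathbb{R}^n$ and $\lambda_r,\kappa_r\in\mathbb{R}$ with $\kappa_r<0$ for all $r$. Let $\mathcal A=\sum_{r=1}^n\lambda_r v_r^{\otimes k}$, $K=\sum_{r=1}^n\kappa_r v_rv_r^\top$, and consider $\dot x=Kx+\mathcal A x^{k-1}$ with initial condition $x(0)=x_0$ and modal coordinates $y_r(t)=v_r^\top x(t)$. Let $\mathcal I_+:=\{r:\lambda_r>0\}$, $\mathcal I_-:=\{r:\lambda_r<0\}$; for $r\in\mathcal I_+$ let $c_r:=(-\kappa_r/\lambda_r)^{1/p}>0$, and for $p$ odd and $r\in\mathcal I_-$ let $c_r:=-(\kappa_r/\lambda_r)^{1/p}<0$. (i) If $p$ is even and there exists $r\in\mathcal I_+$ with $|v_r^\top x_0|>c_r$, then the solution escapes to infinity in finite time. (ii) If $p$ is odd: if there exists $r\in\mathcal I_+$ with $v_r^\top x_0>c_r$, then the solution escapes in finite time with $y_r(t)\to+\infty$; moreover, for $r\in\mathcal I_+$, any initial condition with $v_r^\top x_0<c_r$ (in particular any $v_r^\top x_0<0$) yields a forward-complete mode $y_r$ converging to $0$. If there exists $r\in\mathcal I_-$ with $v_r^\top x_0<c_r$, then the solution escapes in finite time with $y_r(t)\to-\infty$. In all cases, the (first) finite-time escape time is $T_{\mathrm{esc}}=\min_{r} T_{\mathrm{esc},r}$, where for each mode $r$ with $\lambda_r\neq 0$ whose initial value $y_{r,0}:=v_r^\top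 x_0$ satisfies one of the escape conditions above, $$T_{\mathrm{esc},r}=\frac{1}{p|\kappa_r|}\ln\!\left(\frac{\lambda_r/|\kappa_r|}{\lambda_r/|\kappa_r|-y_{r,0}^{-p}}\right),$$ and $T_{\mathrm{esc},r}=+\infty$ for modes that satisfy no escape condition.
   Context: For $v\in\mathbb{R}^n$, $v^{\otimes k}$ is the $k$th-order tensor with entries $(v^{\otimes k})_{i_1\cdots i_k}=v_{i_1}\cdots v_{i_k}$. For a $k$th-order tensor $\mathcal A=(a_{i_1\cdots i_k})$ and $x\in\mathbb{R}^n$, $(\mathcal A x^{k-1})_i=\sum_{i_2,\dots,i_k=1}^n a_{i i_2\cdots i_k}x_{i_2}\cdots x_{i_k}$. Escape to infinity in finite time means $\|x(t)\|_2\to\infty$ as $t$ approaches a finite time. *)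

From HB Require Import structures.
From mathcomp Require Import all_boot all_order all_algebra.
From mathcomp Require Import all_classical all_reals all_analysis.
Set Implicit Arguments. Unset Strict Implicit. Unset Printing Implicit Defensive.
Import Order.TTheory GRing.Theory Num.Theory numFieldNormedType.Exports.
Local Open Scope ring_scope.
Local Open Scope classical_set_scope.

Definition tensor (R : Type) (n k : nat) := k.-tuple 'I_n -> R.

Definition tpow {R : comNzRingType} {n : nat} (k : nat) (v : 'cV[R]_n) : tensor R n k :=
  fun idx => \prod_(m < k) v (tnth idx m) 0.

(* (A x^{k-1})_i = sum_{i_2..i_k} a_{i i_2 .. i_k} x_{i_2} ... x_{i_k}, for k = q+1 *)
Definition tapply {R : comNzRingType} {n q : nat} (A : tensor R n q.+1) (x : 'cV[R]_n)
  : 'cV[R]_n :=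
  \col_i \sum_(j : q.-tuple 'I_n) A (cons_tuple i j) * \prod_(m < q) x (tnth j m) 0.

Definition dotv {R : comNzRingType} {n : nat} (u w : 'cV[R]_n) : R :=
  \sum_i u i 0 * w i 0.
Definition norm2 {R : rcfType} {n : nat} (u : 'cV[R]_n) : R := Num.sqrt (dotv u u).

(* {v_1,..,v_n} orthonormal (n orthonormal vectors in R^n form a basis) *)
Definition orthonormal_family {R : comNzRingType} {n : nat} (v : 'I_n -> 'cV[R]_n) : Prop :=
  forall r s, dotv (v r) (v s) = (r == s)%:R.

Definition Kmat {R : comNzRingType} {n : nat} (kappa : 'I_n -> R) (v : 'I_n -> 'cV[R]_n)
  : 'M[R]_n := \sum_r kappa r *: (v r *m (v r)^T).

Definition Atens {R : comNzRingType} {n : nat} (k : nat) (lam : 'I_n -> R)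
  (v : 'I_n -> 'cV[R]_n) : tensor R n k :=
  fun idx => \sum_r lam r * @tpow R n k (v r) idx.

Definition vfield {R : comNzRingType} {n : nat} (p : nat) (K : 'M[R]_n)
  (A : tensor R n p.+2) (x : 'cV[R]_n) : 'cV[R]_n :=
  K *m x + tapply A x.

Definition is_solution {R : realType} {n : nat} (F : 'cV[R]_n -> 'cV[R]_n)
  (x0 : 'cV[R]_n) (T : R) (x : R -> 'cV[R]_n) : Prop :=
  [/\ x 0 = x0,
      {within `[0, T[, continuous x} &
      forall t, 0 < t < T -> is_derive t 1 x (F (x t))].

Definition cplus {R : realType} (p : nat) (lam kappa : R) : R :=
  (- kappa / lam) `^ (p%:R^-1).
Definition cminus {R : realType} (p : nat) (lam kappa : R) : R :=
  - ((kappa / lam) `^ (p%:R^-1)).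

Definition escape_cond {R : realType} (p : nat) (lam kappa y0 : R) : Prop :=
  if odd p then (0 < lam /\ cplus p lam kappa < y0) \/
                (lam < 0 /\ y0 < cminus p lam kappa)
  else 0 < lam /\ cplus p lam kappa < `|y0|.

Definition Tesc_mode {R : realType} (p : nat) (lam kappa y0 : R) : R :=
  (p%:R * `|kappa|)^-1 *
  ln ((lam / `|kappa|) / (lam / `|kappa| - y0 ^- p)).

From HB Require Import structures.
From mathcomp Require Import all_boot all_order all_algebra.
From mathcomp Require Import all_classical all_reals all_analysis.
From mathcomp Require Import ring lra.
Import Order.TTheory GRing.Theory Num.Theory numFieldNormedType.Exports.
Local Open Scope ring_scope.
Local Open Scope classical_set_scope.

(* In the orthonormal basis {v_r} the system decouples: y_r = v_r^T x solves the scalar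
   Bernoulli equation y' = kappa_r y + lam_r y^(p+1).  With a = - kappa_r > 0 and
   b = lam_r y_r(0)^p / a its solution is explicit,
     y(t) = y(0) e^(-a t) D(t)^(-1/p),   D(t) = 1 - b (1 - e^(-p a t)).
   If b > 1 (this is exactly the escape condition on y_r(0)), D vanishes at
   T_r = ln (b / (b - 1)) / (p a) = T_esc,r and y blows up with the sign of y(0); if b < 1,
   D stays bounded away from 0 and y decays to 0.  The vector sum_r y_r(t) v_r therefore
   solves the system up to the first modal blow-up time, where its norm, which dominates
   every |y_r|, diverges. *)

Section Limits.
Context {R : realType}.

Lemma cvgy_expR : @expR R x @[x --> +oo] --> +oo.
Proof.
apply: (@ger_cvgy _ _ _ _ (fun x => 1 + x)); last first.
  apply/cvgryPge => A; near=> x.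
  by rewrite -lerBlDl; near: x; apply: nbhs_pinfty_ge; exact: num_real.
by apply: nearW => x; exact: expR_ge1Dx.
Unshelve. all: end_near. Qed.

Lemma cvg_ln_Ny {T} {F : set_system T} {FF : Filter F} (f : T -> R) :
  f @ F --> 0 -> (\forall t \near F, 0 < f t) -> ln (f t) @[t --> F] --> -oo.
Proof.
move=> f0 f_gt0; apply/cvgrNyPle => A.
have : \forall x \near 0^'+, ln x <= A by exact: cvgrNy_le (@lnNy R) A.
rewrite near_withinE => /f0 lnA.
by apply: filterS2 f_gt0 lnA => t ft /(_ ft).
Qed.

Lemma is_derive_continuous (f : R -> R) (t df : R) : is_derive t 1 f df -> {for t, continuous f}.
Proof. by move=> [fd _]; apply/differentiable_continuous; rewrite -derivable1_diffP. Qed.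

End Limits.

Section Bernoulli.
Context {R : realType}.
Variables (p : nat) (a b : R).
Implicit Types t y lam : R.

Definition bernoulli_den t := 1 - b * (1 - expR (- (p%:R * a) * t)).
Definition bernoulli_exponent t := a * t + ln (bernoulli_den t) / p%:R.
Definition bernoulli_sol y t := y * expR (- bernoulli_exponent t).
Definition blowup_time := (p%:R * a)^-1 * ln (b / (b - 1)).

Hypotheses (p_gt0 : (0 < p)%N) (a_gt0 : 0 < a).

Let pa_gt0 : 0 < p%:R * a. Proof. by rewrite mulr_gt0 // ltr0n. Qed.
Let pnat_neq0 : p%:R != 0 :> R. Proof. by rewrite pnatr_eq0 -lt0n. Qed.

Lemma bernoulli_sol0 y : bernoulli_sol y 0 = y.
Proof.
by rewrite /bernoulli_sol /bernoulli_exponent /bernoulli_den !mulr0 expR0 subrr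
  mulr0 subr0 ln1 mul0r addr0 oppr0 expR0 mulr1.
Qed.

Lemma bernoulli_solN y t : bernoulli_sol (- y) t = - bernoulli_sol y t.
Proof. exact: mulNr. Qed.

Lemma normr_bernoulli_sol y t : `|bernoulli_sol y t| = bernoulli_sol `|y| t.
Proof. by rewrite normrM (gtr0_norm (expR_gt0 _)). Qed.

Lemma is_derive_bernoulli_den t :
  is_derive t 1 bernoulli_den (- b * (p%:R * a) * expR (- (p%:R * a) * t)).
Proof.
apply: is_derive_eq.
rewrite -[_%:A]/(_ *: 1) -[b *: _]/(b * _) [_ *: 1]mulr1.
ring.
Qed.

Lemma expR_bernoulli_exponentX t : 0 < bernoulli_den t ->
  expR (- bernoulli_exponent t) ^+ p = expR (- (p%:R * a) * t) / bernoulli_den t.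
Proof.
move=> den_gt0; rewrite -expRM_natl /bernoulli_exponent.
have -> : p%:R * - (a * t + ln (bernoulli_den t) / p%:R) =
          - (p%:R * a) * t + - ln (bernoulli_den t) by field.
by rewrite expRD expRN lnK.
Qed.

Lemma is_derive_bernoulli_sol lam y t : 0 < bernoulli_den t -> lam * y ^+ p = a * b ->
  is_derive t 1 (bernoulli_sol y)
    (- a * bernoulli_sol y t + lam * bernoulli_sol y t ^+ p.+1).
Proof.
move=> den_gt0 lamE.
have is_derive_ln_den : is_derive t 1 (@ln R \o bernoulli_den) _ :=
  is_derive1_comp (is_derive1_ln den_gt0) (is_derive_bernoulli_den t).
set F := expR (- (p%:R * a) * t); set D := bernoulli_den t.
have solX : bernoulli_sol y t ^+ p.+1 = bernoulli_sol y t * (y ^+ p * (F / D)).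
  by rewrite exprS {2}/bernoulli_sol exprMn expR_bernoulli_exponentX.
rewrite solX; set S := bernoulli_sol y t.
have -> : lam * (S * (y ^+ p * (F / D))) = lam * y ^+ p * (S * F / D) by ring.
rewrite lamE /S /bernoulli_sol; apply: is_derive_eq.
have mul_scaleE : forall x y : R, x *: y = x * y by [].
rewrite !mul_scaleE mulr0 mulr1 mulr0 add0r /F /D.
field.
by rewrite pnat_neq0 gt_eqF.
Qed.

Lemma blowup_time_gt0 : 1 < b -> 0 < blowup_time.
Proof.
move=> b_gt1; have b_gt0 : 0 < b by rewrite (lt_trans ltr01).
rewrite /blowup_time mulr_gt0 ?invr_gt0 // ln_gt0 // ltr_pdivlMr ?subr_gt0 // mul1r.
by rewrite ltrBlDr ltrDl.
Qed.

Lemma expR_blowup_time : 1 < b -> expR (- (p%:R * a) * blowup_time) = (b - 1) / b.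
Proof.
move=> b_gt1; have b_gt0 : 0 < b by rewrite (lt_trans ltr01).
rewrite /blowup_time mulNr mulrA mulfV ?gt_eqF // mul1r expRN lnK ?invf_div //.
by rewrite posrE divr_gt0 // subr_gt0.
Qed.

Lemma bernoulli_den_blowup_time : 1 < b -> bernoulli_den blowup_time = 0.
Proof.
move=> b_gt1; rewrite /bernoulli_den expR_blowup_time //; field.
by rewrite gt_eqF // (lt_trans ltr01).
Qed.

Lemma bernoulli_den_gt0_before t : 1 < b -> t < blowup_time -> 0 < bernoulli_den t.
Proof.
move=> b_gt1 t_lt; have b_gt0 : 0 < b by rewrite (lt_trans ltr01).
have : expR (- (p%:R * a) * blowup_time) < expR (- (p%:R * a) * t).
  by rewrite ltr_expR !mulNr ltrN2 ltr_pM2l.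
rewrite expR_blowup_time // ltr_pdivrMr // /bernoulli_den.
nra.
Qed.

Let expR_decay_le1 t : 0 <= t -> expR (- (p%:R * a) * t) <= 1.
Proof. by move=> t_ge0; rewrite expR_le1 mulNr oppr_le0 mulr_ge0 // ltW. Qed.

Lemma bernoulli_den_gt0_subcritical t : b <= 1 -> 0 <= t -> 0 < bernoulli_den t.
Proof.
move=> b_le1 t_ge0; have E_gt0 := expR_gt0 (- (p%:R * a) * t).
have E_le1 := expR_decay_le1 _ t_ge0; rewrite /bernoulli_den.
have : 0 <= (1 - b) * (1 - expR (- (p%:R * a) * t)) by rewrite mulr_ge0 // subr_ge0.
nra.
Qed.

Lemma bernoulli_exponent_cvgNy : 1 < b ->
  bernoulli_exponent t @[t --> blowup_time^'-] --> -oo.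
Proof.
move=> b_gt1; set T := blowup_time.
have den_cvg : bernoulli_den t @[t --> T^'-] --> 0.
  rewrite -(bernoulli_den_blowup_time b_gt1); apply: cvg_at_left_filter.
  exact: is_derive_continuous (is_derive_bernoulli_den T).
have t_lt : \forall t \near T^'-, t < T by exact: withinT.
have den_pos : \forall t \near T^'-, 0 < bernoulli_den t.
  by apply: filterS t_lt => t; exact: bernoulli_den_gt0_before.
have pV_gt0 : 0 < p%:R^-1 :> R by rewrite invr_gt0 ltr0n.
have ln_cvg : ln (bernoulli_den t) / p%:R @[t --> T^'-] --> -oo.
  exact: gt0_cvgMlNy pV_gt0 (cvg_ln_Ny _ den_cvg den_pos).
apply/cvgrNyPle => A; near=> t.
apply: (@le_trans _ _ (a * T + ln (bernoulli_den t) / p%:R)).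
  by rewrite lerD2r ler_pM2l // ltW //; near: t.
by rewrite -lerBrDl; near: t; apply: cvgrNy_le ln_cvg _.
Unshelve. all: end_near. Qed.

Lemma bernoulli_sol_cvgy y : 1 < b -> 0 < y ->
  bernoulli_sol y t @[t --> blowup_time^'-] --> +oo.
Proof.
move=> b_gt1 y_gt0; apply: gt0_cvgMry => //.
apply: cvg_comp cvgy_expR.
exact/cvgNry/bernoulli_exponent_cvgNy.
Qed.

Lemma bernoulli_den_ge_min t : b < 1 -> 0 <= t -> Num.min 1 (1 - b) <= bernoulli_den t.
Proof.
move=> b_lt1 t_ge0; have E_gt0 := expR_gt0 (- (p%:R * a) * t).
have E_le1 := expR_decay_le1 _ t_ge0; rewrite ge_min /bernoulli_den; apply/orP.
by case: (leP 0 b) => b0; [right|left]; nra.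
Qed.

Lemma bernoulli_exponent_cvgy : b < 1 -> bernoulli_exponent t @[t --> +oo] --> +oo.
Proof.
move=> b_lt1; set m := Num.min 1 (1 - b).
have m_gt0 : 0 < m by rewrite lt_min ltr01 subr_gt0.
apply: (@ger_cvgy _ _ _ _ (fun t => a * t + ln m / p%:R)).
  near=> t; have m_le : m <= bernoulli_den t.
    by apply: bernoulli_den_ge_min => //; near: t; apply: nbhs_pinfty_ge; exact: num_real.
  by rewrite lerD2l ler_wpM2r ?invr_ge0 ?ler0n // ler_ln ?posrE ?(lt_le_trans m_gt0 m_le).
apply/cvgryPge => A; near=> t.
by rewrite -lerBlDr -ler_pdivrMl //; near: t; apply: nbhs_pinfty_ge; exact: num_real.
Unshelve. all: end_near. Qed.

Lemma bernoulli_sol_cvg0 y : b < 1 -> bernoulli_sol y t @[t --> +oo] --> 0.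
Proof.
move=> b_lt1; rewrite -(mulr0 y); apply: cvgMl_tmp.
exact: (cvg_comp _ _ (bernoulli_exponent_cvgy b_lt1) (@cvgr_expR R)).
Qed.

Lemma bernoulli_sol_subcritical lam y : b < 1 -> lam * y ^+ p = a * b ->
  [/\ bernoulli_sol y 0 = y, {within `[0, +oo[, continuous (bernoulli_sol y)},
      forall t, 0 < t -> is_derive t 1 (bernoulli_sol y)
                           (- a * bernoulli_sol y t + lam * bernoulli_sol y t ^+ p.+1) &
      bernoulli_sol y t @[t --> +oo] --> 0].
Proof.
move=> b_lt1 lamE; have den_gt0 t : 0 <= t -> 0 < bernoulli_den t.
  by move=> t_ge0; apply: bernoulli_den_gt0_subcritical => //; exact: ltW.
split.
- exact: bernoulli_sol0.
- apply: derivable_within_continuous => t; rewrite in_itv /= andbT => t_ge0.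
  by case: (is_derive_bernoulli_sol _ _ _ (den_gt0 t t_ge0) lamE).
- by move=> t t_gt0; exact: is_derive_bernoulli_sol _ _ _ (den_gt0 t (ltW t_gt0)) lamE.
- exact: bernoulli_sol_cvg0.
Qed.

End Bernoulli.

Section Thresholds.
Context {R : realType} {p : nat}.
Hypothesis p_gt0 : (0 < p)%N.

Lemma ltrXn_odd : odd p -> {mono (fun x : R => x ^+ p) : x y / x < y}.
Proof.
move=> p_odd; apply/leW_mono/le_mono => x y xy.
have [x_ge0|x_lt0] := leP 0 x.
  by rewrite ltr_pXn2r // nnegrE // (le_trans x_ge0) ?ltW.
have [y_gt0|y_le0] := ltP 0 y.
  by rewrite (@lt_trans _ _ 0) ?exprn_odd_lt0 ?exprn_odd_gt0.
have Ny_ge0 : 0 <= - y by rewrite oppr_ge0.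
have : (- y) ^+ p < (- x) ^+ p.
  by rewrite ltr_pXn2r ?nnegrE ?ltrN2 // (le_trans Ny_ge0) // lerN2 ltW.
by rewrite (exprNn y) (exprNn x) -signr_odd p_odd expr1 !mulN1r ltrN2.
Qed.

Lemma ltr_normXn_even (c y : R) : ~~ odd p -> 0 <= c -> (c < `|y|) = (c ^+ p < y ^+ p).
Proof.
move=> p_even c_ge0; rewrite -[y ^+ p]ger0_norm ?exprn_even_ge0 // normrX.
by rewrite ltr_pXn2r // qualifE /=.
Qed.

Lemma cplus_gt0 (lam kappa : R) : kappa < 0 -> 0 < lam -> 0 < cplus p lam kappa.
Proof. by move=> k_lt0 l_gt0; rewrite /cplus powR_gt0 // divr_gt0 // oppr_gt0. Qed.

Lemma cplusX (lam kappa : R) : kappa < 0 -> 0 < lam -> cplus p lam kappa ^+ p = - kappa / lam.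
Proof.
move=> k_lt0 l_gt0; have q_ge0 : 0 <= - kappa / lam by rewrite divr_ge0 // ?oppr_ge0 ltW.
rewrite /cplus -powR_mulrn ?powR_ge0 // -powRrM mulVf ?powRr1 //.
by rewrite pnatr_eq0 -lt0n.
Qed.

Lemma cplusX_lt (lam kappa w : R) : kappa < 0 -> 0 < lam ->
  (cplus p lam kappa ^+ p < w) = (- kappa < lam * w).
Proof. by move=> k_lt0 l_gt0; rewrite cplusX // ltr_pdivrMr // mulrC. Qed.

Lemma cminusE (lam kappa : R) : cminus p lam kappa = - cplus p (- lam) kappa.
Proof. by rewrite /cminus /cplus invrN mulrNN. Qed.

Lemma escape_condE (lam kappa y0 : R) : kappa < 0 ->
  escape_cond p lam kappa y0 <-> - kappa < lam * y0 ^+ p.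
Proof.
move=> k_lt0; rewrite /escape_cond; case: ifP => p_odd.
  have [l_gt0|l_lt0|->] := ltrgt0P lam.
  - rewrite -(ltrXn_odd p_odd _ y0) cplusX_lt //.
    by split; [case=> [[]|[]] | left].
  - have Nl_gt0 : 0 < - lam by rewrite oppr_gt0.
    have -> : lam * y0 ^+ p = - lam * (- y0) ^+ p.
      by rewrite exprNn -signr_odd p_odd expr1 mulN1r mulrNN.
    rewrite cminusE ltrNr -(ltrXn_odd p_odd _ (- y0)) cplusX_lt //.
    by split; [case=> [[]|[]] | right].
  - by rewrite mul0r oppr_lt0 (lt_gtF k_lt0); split=> // -[[]|[]].
have [l_gt0|l_le0] := ltP 0 lam.
  rewrite (ltr_normXn_even _ y0 (negbT p_odd) (ltW (cplus_gt0 _ _ k_lt0 l_gt0))) cplusX_lt //.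
  by split=> [[]|].
have ly_le : lam * y0 ^+ p <= - kappa.
  apply: (@le_trans _ _ 0); last by rewrite oppr_ge0 ltW.
  by rewrite mulr_le0_ge0 // exprn_even_ge0 // negbT.
by split=> [[]//|]; rewrite ltNge ly_le.
Qed.

Lemma lt_cplus_subcritical (lam kappa y0 : R) : odd p -> kappa < 0 -> 0 < lam ->
  y0 < cplus p lam kappa -> lam * y0 ^+ p < - kappa.
Proof.
move=> p_odd k_lt0 l_gt0; rewrite -(ltrXn_odd p_odd) cplusX //.
by rewrite ltr_pdivlMr // mulrC.
Qed.

Lemma escape_cond_pos {lam kappa y0 : R} : odd p -> kappa < 0 ->
  0 < lam /\ cplus p lam kappa < y0 -> escape_cond p lam kappa y0 /\ 0 < y0.
Proof.
move=> p_odd k_lt0 [l_gt0 c_lt]; rewrite /escape_cond p_odd.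
by split; [left | exact: lt_trans (cplus_gt0 _ _ k_lt0 l_gt0) c_lt].
Qed.

Lemma escape_cond_neg {lam kappa y0 : R} : odd p ->
  lam < 0 /\ y0 < cminus p lam kappa -> escape_cond p lam kappa y0 /\ y0 < 0.
Proof.
move=> p_odd [l_lt0 y_lt]; rewrite /escape_cond p_odd.
by split; [right | rewrite (lt_le_trans y_lt) // oppr_le0 powR_ge0].
Qed.

Lemma Tesc_modeE (lam kappa y0 : R) : kappa < 0 -> - kappa < lam * y0 ^+ p ->
  Tesc_mode p lam kappa y0 = blowup_time p (- kappa) (lam * y0 ^+ p / - kappa).
Proof.
move=> k_lt0 esc; have yp_neq0 : y0 ^+ p != 0.
  by apply: contraTneq esc => ->; rewrite mulr0 ltNge oppr_ge0 (ltW k_lt0).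
rewrite /Tesc_mode /blowup_time ltr0_norm //.
have -> : lam / - kappa - y0 ^- p = (lam * y0 ^+ p / - kappa - 1) / y0 ^+ p.
  by field; rewrite yp_neq0 lt_eqF.
congr (_ * ln _); field.
by rewrite lt_eqF // yp_neq0 mulN1r opprK andbT -[kappa]opprK subr_eq0 gt_eqF.
Qed.

End Thresholds.

Section Orthonormal.
Context {R : realType} {n : nat} {v : 'I_n -> 'cV[R]_n}.

Lemma dotvC (u w : 'cV[R]_n) : dotv u w = dotv w u.
Proof. by apply: eq_bigr => k _; rewrite mulrC. Qed.

Lemma dotv_sumr (u : 'cV[R]_n) (c : 'I_n -> R) (w : 'I_n -> 'cV[R]_n) :
  dotv u (\sum_r c r *: w r) = \sum_r c r * dotv u (w r).
Proof.
rewrite /dotv; under eq_bigr do rewrite summxE big_distrr /=.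
rewrite exchange_big /=; apply: eq_bigr => r _.
by rewrite big_distrr /=; apply: eq_bigr => k _; rewrite mxE mulrCA.
Qed.

Hypothesis v_on : orthonormal_family v.

Lemma dotv_orthonormal (c : 'I_n -> R) s : dotv (v s) (\sum_r c r *: v r) = c s.
Proof.
rewrite dotv_sumr (bigD1 s) //= v_on eqxx mulr1 big1 ?addr0 // => r rs.
by rewrite v_on eq_sym (negbTE rs) mulr0.
Qed.

Lemma norm2_orthonormal_ge (c : 'I_n -> R) s : `|c s| <= norm2 (\sum_r c r *: v r).
Proof.
have sqr_sum : dotv (\sum_r c r *: v r) (\sum_r c r *: v r) = \sum_r c r ^+ 2.
  by rewrite dotv_sumr; apply: eq_bigr => r _; rewrite dotvC dotv_orthonormal.
rewrite /norm2 sqr_sum -sqrtr_sqr ler_sqrt ?sumr_ge0 // => [|r _]; last exact: sqr_ge0.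
by rewrite (bigD1 s) //= lerDl sumr_ge0 // => r _; exact: sqr_ge0.
Qed.

(* For the square matrix V := [v_1 ... v_n], V^T V = 1 forces V V^T = 1. *)
Lemma orthonormal_expand (x : 'cV[R]_n) : x = \sum_r dotv (v r) x *: v r.
Proof.
set V : 'M[R]_n := \matrix_(i, j) v j i 0.
have VtV : V^T *m V = 1%:M.
  by apply/matrixP => r s; rewrite !mxE -v_on; apply: eq_bigr => k _; rewrite !mxE.
rewrite -[LHS]mul1mx -(mulmx1C VtV); apply/matrixP => i j; rewrite (ord1 j) summxE !mxE.
under eq_bigr do rewrite mxE big_distrl /=.
rewrite exchange_big /=; apply: eq_bigr => r _.
rewrite [RHS]mxE /dotv big_distrl /=; apply: eq_bigr => k _; rewrite !mxE; ring.
Qed.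

End Orthonormal.

Section DiagonalField.
Context {R : realType} {n : nat}.

Lemma sum_tuple_prod q (f : 'I_n -> R) :
  \sum_(j : q.-tuple 'I_n) \prod_(m < q) f (tnth j m) = (\sum_i f i) ^+ q.
Proof.
rewrite -[q in RHS]card_ord -prodr_const bigA_distr_bigA /=.
rewrite (reindex (fun j : q.-tuple 'I_n => [ffun m => tnth j m])) /=.
  by apply: eq_bigr => j _; apply: eq_bigr => m _; rewrite ffunE.
exists (fun g : {ffun 'I_q -> 'I_n} => [tuple g m | m < q]) => [j _|g _].
  by apply: eq_from_tnth => m; rewrite tnth_mktuple ffunE.
by apply/ffunP => m; rewrite ffunE tnth_mktuple.
Qed.

Lemma tapply_Atens p (lam : 'I_n -> R) (v : 'I_n -> 'cV[R]_n) (x : 'cV[R]_n) i :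
  tapply (@Atens R n p.+2 lam v) x i 0 = \sum_r lam r * dotv (v r) x ^+ p.+1 * v r i 0.
Proof.
rewrite /tapply mxE /Atens; under eq_bigr do rewrite big_distrl /=.
rewrite exchange_big /=; apply: eq_bigr => r _.
rewrite /dotv -sum_tuple_prod big_distrr big_distrl /=; apply: eq_bigr => j _.
rewrite /tpow big_ord_recl tnth0 /=.
under eq_bigr do rewrite tnthS.
rewrite [in RHS]big_split /=; ring.
Qed.

Lemma Kmat_mulmx (kappa : 'I_n -> R) (v : 'I_n -> 'cV[R]_n) (x : 'cV[R]_n) i :
  (Kmat kappa v *m x) i 0 = \sum_r kappa r * dotv (v r) x * v r i 0.
Proof.
rewrite /Kmat mxE; under eq_bigr do rewrite summxE big_distrl /=.
rewrite exchange_big /=; apply: eq_bigr => r _.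
rewrite /dotv big_distrr big_distrl /=; apply: eq_bigr => k _.
rewrite !mxE big_ord1 !mxE; ring.
Qed.

Lemma vfield_diagonal p (kappa lam : 'I_n -> R) (v : 'I_n -> 'cV[R]_n) (x : 'cV[R]_n) :
  @vfield R n p (Kmat kappa v) (@Atens R n p.+2 lam v) x =
  \sum_r (kappa r * dotv (v r) x + lam r * dotv (v r) x ^+ p.+1) *: v r.
Proof.
apply/matrixP => i j; rewrite (ord1 j) /vfield mxE Kmat_mulmx tapply_Atens summxE.
by rewrite -big_split /=; apply: eq_bigr => r _; rewrite mxE mulrDl.
Qed.

Lemma is_derive_scalel (f : R -> R) (w : 'cV[R]_n) (t df : R) :
  is_derive t 1 f df -> is_derive t 1 (fun s => f s *: w) (df *: w).
Proof.
move=> [f_der <-]; have f_diff : differentiable f t by apply/derivable1_diffP.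
apply: DeriveDef; first by apply: diff_derivable; exact: differentiableZl.
by rewrite deriveE ?diffZl -?deriveE //; exact: differentiableZl.
Qed.

Lemma is_derive_sum_scalel (c : 'I_n -> R -> R) (dc : 'I_n -> R) (w : 'I_n -> 'cV[R]_n) (t : R) :
  (forall r, is_derive t 1 (c r) (dc r)) ->
  is_derive t 1 (fun s => \sum_r c r s *: w r) (\sum_r dc r *: w r).
Proof.
move=> c_der; have := is_derive_sum (fun r => is_derive_scalel _ (w r) _ _ (c_der r)).
by rewrite fct_sumE.
Qed.

End DiagonalField.

Section ModalSolution.
Context {R : realType} {n p : nat} {v : 'I_n -> 'cV[R]_n}.
Context {lam kappa : 'I_n -> R} {x0 : 'cV[R]_n}.
Hypotheses (p_gt0 : (0 < p)%N) (v_on : orthonormal_family v).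
Hypothesis kappa_lt0 : forall r, kappa r < 0.
Implicit Types t T : R.

Local Notation y0 r := (dotv (v r) x0).
Local Notation esc r := (escape_cond p (lam r) (kappa r) (y0 r)).
Local Notation Tr r := (Tesc_mode p (lam r) (kappa r) (y0 r)).
Local Notation F := (@vfield R n p (Kmat kappa v) (@Atens R n p.+2 lam v)).

Definition mode_growth r := lam r * y0 r ^+ p / - kappa r.
Definition mode_sol r := bernoulli_sol p (- kappa r) (mode_growth r) (y0 r).
Definition modal_sol t := \sum_r mode_sol r t *: v r.

Let Nkappa_gt0 r : 0 < - kappa r. Proof. by rewrite oppr_gt0. Qed.

Lemma mode_growthE r : lam r * y0 r ^+ p = - kappa r * mode_growth r.
Proof. by rewrite /mode_growth [RHS]mulrC divfK // gt_eqF. Qed.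

Lemma escape_cond_growth r : esc r <-> 1 < mode_growth r.
Proof. by rewrite escape_condE // /mode_growth ltr_pdivlMr // mul1r. Qed.

Lemma Tesc_mode_growth r : esc r -> Tr r = blowup_time p (- kappa r) (mode_growth r).
Proof. by move/escape_condE => /(_ p_gt0 (kappa_lt0 r)) /Tesc_modeE ->. Qed.

Lemma Tesc_mode_gt0 r : esc r -> 0 < Tr r.
Proof.
move=> er; rewrite Tesc_mode_growth //; apply: blowup_time_gt0 => //.
exact/escape_cond_growth.
Qed.

Lemma exists_first_escape r0 : esc r0 -> exists2 r, esc r & forall s, esc s -> Tr r <= Tr s.
Proof.
move=> er0; case: (@arg_minP _ _ _ r0 (fun r => `[< esc r >]) (fun r => Tr r)); first exact/asboolP.
by move=> r /asboolP er r_min; exists r => // s es; apply: r_min; exact/asboolP.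
Qed.

Lemma dotv_modal_sol r t : dotv (v r) (modal_sol t) = mode_sol r t.
Proof. exact: dotv_orthonormal. Qed.

Lemma modal_sol0 : modal_sol 0 = x0.
Proof.
rewrite [RHS](orthonormal_expand v_on); apply: eq_bigr => r _.
by rewrite /mode_sol bernoulli_sol0.
Qed.

Lemma is_solution_modal_sol T : (forall r, esc r -> T <= Tr r) -> is_solution F x0 T modal_sol.
Proof.
move=> T_le.
have den_gt0 r t : 0 <= t -> t < T -> 0 < bernoulli_den p (- kappa r) (mode_growth r) t.
  move=> t_ge0 t_lt; have [er|ner] := pselect (esc r).
    apply: bernoulli_den_gt0_before => //; first exact/escape_cond_growth.
    by rewrite -Tesc_mode_growth //; exact: lt_le_trans t_lt (T_le r er).
  have b_le1 : mode_growth r <= 1 by rewrite leNgt; apply/negP => /escape_cond_growth.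
  exact: bernoulli_den_gt0_subcritical.
have modal_der t : 0 <= t -> t < T -> is_derive t 1 modal_sol (F (modal_sol t)).
  move=> t_ge0 t_lt; rewrite vfield_diagonal.
  under eq_bigr do rewrite dotv_modal_sol -[kappa _]opprK.
  apply: is_derive_sum_scalel => r.
  apply: is_derive_bernoulli_sol (den_gt0 r t t_ge0 t_lt) (mode_growthE r) => //.
split.
- exact: modal_sol0.
- apply: derivable_within_continuous => t; rewrite in_itv /= => /andP[t_ge0 t_lt].
  by case: (modal_der t t_ge0 t_lt).
- by move=> t /andP[t_gt0 t_lt]; apply: modal_der => //; exact: ltW.
Qed.

Lemma mode_sol_blowup r : esc r ->
  (0 < y0 r -> dotv (v r) (modal_sol t) @[t --> (Tr r)^'-] --> +oo) /\
  (y0 r < 0 -> dotv (v r) (modal_sol t) @[t --> (Tr r)^'-] --> -oo).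
Proof.
move=> er; have b_gt1 := (escape_cond_growth r).1 er.
under eq_fun do rewrite dotv_modal_sol.
rewrite Tesc_mode_growth //; split => [y_gt0|y_lt0].
  exact: bernoulli_sol_cvgy.
apply/cvgNry; have -> : - mode_sol r = bernoulli_sol p (- kappa r) (mode_growth r) (- y0 r).
  by apply/funext => t; rewrite bernoulli_solN.
by apply: bernoulli_sol_cvgy; rewrite ?oppr_gt0.
Qed.

Lemma norm2_modal_sol_cvgy r : esc r -> norm2 (modal_sol t) @[t --> (Tr r)^'-] --> +oo.
Proof.
move=> er; have b_gt1 := (escape_cond_growth r).1 er.
have y_neq0 : y0 r != 0.
  apply: contraTneq b_gt1 => y_eq0.
  by rewrite /mode_growth y_eq0 expr0n gtn_eqF // mulr0 mul0r ltr10.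
apply: (@ger_cvgy _ _ _ _ (fun t => `|mode_sol r t|)).
  by apply: nearW => t; exact: norm2_orthonormal_ge.
rewrite Tesc_mode_growth //; under eq_fun do rewrite normr_bernoulli_sol.
by apply: bernoulli_sol_cvgy; rewrite ?normr_gt0.
Qed.

Lemma modal_escape r0 : esc r0 ->
  exists T, [/\ 0 < T, (exists2 r, esc r & T = Tr r), (forall r, esc r -> T <= Tr r) &
    exists x, [/\ is_solution F x0 T x, norm2 (x t) @[t --> T^'-] --> +oo &
      forall r, esc r -> Tr r = T ->
        (0 < y0 r -> dotv (v r) (x t) @[t --> T^'-] --> +oo) /\
        (y0 r < 0 -> dotv (v r) (x t) @[t --> T^'-] --> -oo)]].
Proof.
case/exists_first_escape => rs esc_rs rs_min; exists (Tr rs); split => //.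
- exact: Tesc_mode_gt0.
- by exists rs.
exists modal_sol; split.
- exact: is_solution_modal_sol.
- exact: norm2_modal_sol_cvgy.
- by move=> r er <-; exact: mode_sol_blowup.
Qed.

Lemma mode_sol_subcritical r : lam r * y0 r ^+ p < - kappa r ->
  [/\ mode_sol r 0 = y0 r, {within `[0, +oo[, continuous (mode_sol r)},
      forall t, 0 < t -> is_derive t 1 (mode_sol r)
                           (kappa r * mode_sol r t + lam r * mode_sol r t ^+ p.+1) &
      mode_sol r t @[t --> +oo] --> 0].
Proof.
move=> subcrit; have b_lt1 : mode_growth r < 1 by rewrite ltr_pdivrMr // mul1r.
have := bernoulli_sol_subcritical _ _ _ p_gt0 (Nkappa_gt0 r) _ _ b_lt1 (mode_growthE r).
by rewrite opprK.
Qed.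

End ModalSolution.

Theorem theorem3 (R : realType) (n : nat) (hn : (1 <= n)%N) (p : nat) (hp : (1 <= p)%N)
  (v : 'I_n -> 'cV[R]_n) (hv : orthonormal_family v)
  (lam kappa : 'I_n -> R) (hkappa : forall r, kappa r < 0)
  (x0 : 'cV[R]_n) :
  let F := @vfield R n p (Kmat kappa v) (@Atens R n p.+2 lam v) in
  let y0 := fun r => dotv (v r) x0 in
  let esc := fun r => escape_cond p (lam r) (kappa r) (y0 r) in
  let Tr := fun r => Tesc_mode p (lam r) (kappa r) (y0 r) in
  let escapes_at (T : R) (extra : (R -> 'cV[R]_n) -> Prop) :=
    [/\ 0 < T, (exists2 r, esc r & T = Tr r), (forall r, esc r -> T <= Tr r) &
        exists x, [/\ is_solution F x0 T x,
                      norm2 (x t) @[t --> T^'-] --> +oo & extra x]] in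
  [/\
   (* (i) *)
   (~~ odd p -> (exists r, 0 < lam r /\ cplus p (lam r) (kappa r) < `|y0 r|) ->
     exists T, escapes_at T (fun _ => True)),
   (* (ii), first claim *)
   (odd p -> (exists r, 0 < lam r /\ cplus p (lam r) (kappa r) < y0 r) ->
     exists T, escapes_at T (fun x => forall r, Tr r = T ->
        (0 < lam r /\ cplus p (lam r) (kappa r) < y0 r ->
           dotv (v r) (x t) @[t --> T^'-] --> +oo) /\
        (lam r < 0 /\ y0 r < cminus p (lam r) (kappa r) ->
           dotv (v r) (x t) @[t --> T^'-] --> -oo))),
   (* (ii), forward-complete modes *)
   (odd p -> forall r, 0 < lam r -> y0 r < cplus p (lam r) (kappa r) ->
     exists y : R -> R,
       [/\ y 0 = y0 r, {within `[0, +oo[, continuous y},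
           (forall t : R, 0 < t -> is_derive t 1 y (kappa r * y t + lam r * y t ^+ p.+1)) &
           y t @[t --> +oo] --> 0]) &
   (* (ii), last claim *)
   (odd p -> (exists r, lam r < 0 /\ y0 r < cminus p (lam r) (kappa r)) ->
     exists T, escapes_at T (fun x => forall r, Tr r = T ->
        (0 < lam r /\ cplus p (lam r) (kappa r) < y0 r ->
           dotv (v r) (x t) @[t --> T^'-] --> +oo) /\
        (lam r < 0 /\ y0 r < cminus p (lam r) (kappa r) ->
           dotv (v r) (x t) @[t --> T^'-] --> -oo)))].
Proof.
move=> F y0 esc Tr escapes_at.
have odd_escape r0 : odd p -> esc r0 -> exists T, escapes_at T (fun x => forall r, Tr r = T ->
    (0 < lam r /\ cplus p (lam r) (kappa r) < y0 r -> dotv (v r) (x t) @[t --> T^'-] --> +oo) /\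
    (lam r < 0 /\ y0 r < cminus p (lam r) (kappa r) -> dotv (v r) (x t) @[t --> T^'-] --> -oo)).
  move=> p_odd /(modal_escape hp hv hkappa).
  case=> T [T_gt0 T_attained T_first [x [x_sol x_blowup x_modes]]].
  exists T; split => //; exists x; split => // r Tr_T; split.
  - by case/(escape_cond_pos p_odd (hkappa r)) => er y_gt0; exact: (x_modes r er Tr_T).1.
  - by case/(escape_cond_neg p_odd) => er y_lt0; exact: (x_modes r er Tr_T).2.
split.
- move=> p_even [r er].
  have /(modal_escape hp hv hkappa) [T [T_gt0 T_attained T_first [x [x_sol x_blowup _]]]] : esc r.
    by rewrite /esc /escape_cond (negbTE p_even).
  by exists T; split => //; exists x.
- by move=> p_odd [r /(escape_cond_pos p_odd (hkappa r)) [er _]]; exact: odd_escape r p_odd er.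
- move=> p_odd r l_gt0 y_lt; exists (@mode_sol _ _ p v lam kappa x0 r).
  by apply: mode_sol_subcritical => //; exact: lt_cplus_subcritical.
- by move=> p_odd [r /(escape_cond_neg p_odd) [er _]]; exact: odd_escape r p_odd er.
Qed.
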